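(* Let $D\colon\mathbf{I}\to\mathbf{CompOrd}$ be a codirected diagram, let $(f_i\colon X\to D(i))_{i\in\mathbf{I}}$ be a limit cone for $D$ in $\mathbf{CompOrd}$, and let $K,L$ be closed subsets of $X$. Then: (1) $\uparrow K\subseteq\uparrow L$ iff $\uparrow f_i[K]\subseteq\uparrow f_i[L]$ for all $i\in\mathbf{I}$; (2) $\downarrow K\subseteq\downarrow L$ iff $\downarrow f_i[K]\subseteq\downarrow f_i[L]$ for all $i\in\mathbf{I}$; (3) $\updownarrow K\le_{\mathrm{EM}}\updownarrow L$ iff $\updownarrow f_i[K]\le_{\mathrm{EM}}\updownarrow f_i[L]$ for all $i\in\mathbf{I}$.
   Context: $\mathbf{CompOrd}$ is the category of compact ordered spaces (compact Hausdorff spaces with a partial order closed in $X\times X$) and continuous order-preserving maps. For a subset $Y$ of a poset, $\uparrow Y$, $\downarrow Y$ denote up- and down-closure and $\updownarrow Y=\uparrow Y\cap\downarrow Y$. For subsets $K,L$ of a poset, the Egli–Milner order is $K\le_{\mathrm{EM}}L$ iff $\uparrow L\subseteq\uparrow K$ and $\downarrow K\subseteq\downarrow L$. A codirected diagram is a diagram indexed by a small cofiltered preorder. *)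

From HB Require Import structures.
From mathcomp Require Import all_boot all_order.
From mathcomp Require Import all_classical all_reals topology.
Set Implicit Arguments. Unset Strict Implicit. Unset Printing Implicit Defensive.
Local Open Scope classical_set_scope.

Definition is_compord (X : topologicalType) (le : X -> X -> Prop) : Prop :=
  [/\ hausdorff_space X, compact [set: X],
      (forall x, le x x) /\
      (forall x y, le x y -> le y x -> x = y),
      (forall x y z, le x y -> le y z -> le x z)
    & closed ([set p | le p.1 p.2] : set (X * X))].

Definition is_compord_map (X Y : topologicalType)
  (leX : X -> X -> Prop) (leY : Y -> Y -> Prop) (f : X -> Y) : Prop :=
  continuous f /\ (forall x y, leX x y -> leY (f x) (f y)).

Definition upc (T : Type) (le : T -> T -> Prop) (A : set T) : set T :=
  [set y | exists2 x, A x & le x y].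
Definition downc (T : Type) (le : T -> T -> Prop) (A : set T) : set T :=
  [set y | exists2 x, A x & le y x].
Definition updownc (T : Type) (le : T -> T -> Prop) (A : set T) : set T :=
  upc le A `&` downc le A.
Definition EM_le (T : Type) (le : T -> T -> Prop) (K L : set T) : Prop :=
  upc le L `<=` upc le K /\ downc le K `<=` downc le L.

(* A small cofiltered preorder I (an arrow i -> j exists iff rI i j). *)
Definition cofiltered_preorder (I : Type) (rI : I -> I -> Prop) : Prop :=
  [/\ (forall i, rI i i),
      (forall i j k, rI i j -> rI j k -> rI i k),
      (exists i : I, True)
    & (forall i j, exists k, rI k i /\ rI k j)].

Definition is_compord_diagram (I : Type) (rI : I -> I -> Prop)
  (D : I -> topologicalType) (leD : forall i, D i -> D i -> Prop)
  (dmap : forall i j, rI i j -> D i -> D j) : Prop :=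
  [/\ (forall i, is_compord (leD i)),
      (forall i j (p : rI i j), is_compord_map (leD i) (leD j) (dmap i j p)),
      (forall i (p : rI i i) x, dmap i i p x = x)
    & (forall i j k (p : rI i j) (q : rI j k) (r : rI i k) x,
         dmap i k r x = dmap j k q (dmap i j p x))].

Definition is_compord_cone (I : Type) (rI : I -> I -> Prop)
  (D : I -> topologicalType) (leD : forall i, D i -> D i -> Prop)
  (dmap : forall i j, rI i j -> D i -> D j)
  (Y : topologicalType) (leY : Y -> Y -> Prop) (g : forall i, Y -> D i) : Prop :=
  [/\ is_compord leY,
      (forall i, is_compord_map leY (leD i) (g i))
    & (forall i j (p : rI i j) y, dmap i j p (g i y) = g j y)].

Definition is_compord_limit (I : Type) (rI : I -> I -> Prop)
  (D : I -> topologicalType) (leD : forall i, D i -> D i -> Prop)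
  (dmap : forall i j, rI i j -> D i -> D j)
  (X : topologicalType) (leX : X -> X -> Prop) (f : forall i, X -> D i) : Prop :=
  is_compord_cone leD dmap leX f /\
  (forall (Y : topologicalType) (leY : Y -> Y -> Prop) (g : forall i, Y -> D i),
     is_compord_cone leD dmap leY g ->
     exists h : Y -> X,
       [/\ is_compord_map leY leX h,
           (forall i y, f i (h y) = g i y)
         & (forall h' : Y -> X, is_compord_map leY leX h' ->
              (forall i y, f i (h' y) = g i y) -> h' = h)]).

From HB Require Import structures.
From mathcomp Require Import all_boot all_order.
From mathcomp Require Import all_classical all_reals topology.
Local Open Scope classical_set_scope.

(* Two facts about the limit cone (f_i : X -> D i) drive the
   argument, both obtained by testing the universal property against cones
   from the discrete two-point space [bool]:
   - the maps f_i are jointly injective (test with the discrete order), and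
   - they jointly reflect the order (test with the order false <= true).
   The inclusion [upc K <= upc L] trivially implies its images at each stage.
   Conversely, given x above some k in K, the sets
     B i = L /\ { y | f_i y <= f_i x }
   are closed, nonempty by the hypothesis at stage i, and codirected because
   the transition maps are monotone and the index category is cofiltered;
   compactness of X yields z in every B i, so z is in L and z <= x by order
   reflection.  This compactness argument is proved once for an abstract
   order; statement (2) is its instance for the dual orders.  Statement (3)
   follows from (1) and (2) because up- and down-closures of the convex hull
   [updownc A] coincide with those of A for any preorder. *)

Lemma bool_continuous (Z : topologicalType) (g : bool -> Z) : continuous g.
Proof.
move=> x B /= gB; apply: (filterS _ (discrete_set1 x)) => y /= ->.
exact: nbhs_singleton.
Qed.

Lemma bool_is_compord (le : bool -> bool -> Prop) :
  (forall x, le x x) -> (forall x y, le x y -> le y x -> x = y) ->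
  (forall x y z, le x y -> le y z -> le x z) -> is_compord le.
Proof.
move=> le_refl le_anti le_trans; split => //.
- move=> p q cl.
  by have [z [/= -> ->]] := cl [set p] [set q] (discrete_set1 p) (discrete_set1 q).
- exact/finite_compact/finite_finset.
- move=> p cp; have [z [le_z /= zp]] : [set p | le p.1 p.2] `&` [set p] !=set0.
    apply: cp; exists ([set p.1], [set p.2]); first by split; exact: discrete_set1.
    by case=> a b /= [-> ->]; case: p.
  by rewrite -zp.
Qed.

Lemma closed_principal_sets (T : topologicalType) (le : T -> T -> Prop) (c : T) :
  closed ([set p | le p.1 p.2] : set (T * T)) ->
  closed [set d | le d c] /\ closed [set d | le c d].
Proof.
move=> cl; split.
- have -> : [set d | le d c] = (fun d => (d, c)) @^-1` [set p | le p.1 p.2] by [].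
  apply: preimage_closed => // x _; apply: cvg_pair; [exact: cvg_id | exact: cvg_cst].
- have -> : [set d | le c d] = (fun d => (c, d)) @^-1` [set p | le p.1 p.2] by [].
  apply: preimage_closed => // x _; apply: cvg_pair; [exact: cvg_cst | exact: cvg_id].
Qed.

Section ConvexHull.
Variables (T : Type) (le : T -> T -> Prop).
Hypotheses (le_refl : forall x, le x x)
  (le_trans : forall x y z, le x y -> le y z -> le x z).

Lemma upc_updownc (A : set T) : upc le (updownc le A) = upc le A.
Proof.
apply/seteqP; split => y.
- by move=> [x [[a Aa ax] _] xy]; exists a => //; exact: le_trans ax xy.
- by move=> [x Ax xy]; exists x => //; split; exists x.
Qed.

Lemma downc_updownc (A : set T) : downc le (updownc le A) = downc le A.
Proof.
apply/seteqP; split => y.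
- by move=> [x [_ [a Aa ax]] xy]; exists a => //; exact: le_trans xy ax.
- by move=> [x Ax xy]; exists x => //; split; exists x.
Qed.

Lemma EM_le_updownc (K L : set T) :
  EM_le le (updownc le K) (updownc le L) <-> EM_le le K L.
Proof. by rewrite /EM_le !upc_updownc !downc_updownc. Qed.
End ConvexHull.

Section UpClosureTransfer.
Variables (I : Type) (rI : I -> I -> Prop)
  (D : I -> topologicalType) (leD : forall i, D i -> D i -> Prop)
  (dmap : forall i j, rI i j -> D i -> D j)
  (X : topologicalType) (leX : X -> X -> Prop) (f : forall i, X -> D i).
Hypotheses (cofiltered : cofiltered_preorder rI)
  (leD_trans : forall i x y z, leD i x y -> leD i y z -> leD i x z)
  (dmap_mono : forall i j (p : rI i j) x y,
     leD i x y -> leD j (dmap i j p x) (dmap i j p y))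
  (cone_comm : forall i j (p : rI i j) y, dmap i j p (f i y) = f j y)
  (leX_refl : forall x, leX x x)
  (f_mono : forall i x y, leX x y -> leD i (f i x) (f i y))
  (f_reflect : forall a b, (forall i, leD i (f i a) (f i b)) -> leX a b)
  (X_compact : compact [set: X])
  (closed_below : forall i c, closed [set y | leD i (f i y) c]).

Lemma upc_sub_stages (K L : set X) :
  upc leX K `<=` upc leX L ->
  forall i, upc (leD i) (f i @` K) `<=` upc (leD i) (f i @` L).
Proof.
move=> KL i z [_ [k Kk <-] kz].
have [l Ll lk] := KL k (ex_intro2 _ _ k Kk (leX_refl k)).
by exists (f i l); [exists l | exact: leD_trans (f_mono _ _ _ lk) kz].
Qed.

Lemma upc_sub_from_stages (K L : set X) : closed L ->
  (forall i, upc (leD i) (f i @` K) `<=` upc (leD i) (f i @` L)) ->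
  upc leX K `<=` upc leX L.
Proof.
have [_ _ [i0 _] codir] := cofiltered.
move=> clL stages x [k Kk kx].
pose B i := L `&` [set y | leD i (f i y) (f i x)].
have B_mono k' i (p : rI k' i) : B k' `<=` B i.
  by move=> y [Ly le]; split => //=; rewrite -!(cone_comm _ _ p); exact: dmap_mono.
have B_filter : Filter (filter_from setT B).
  apply: filter_fromT_filter; first by exists i0.
  move=> i j; have [k' [pi pj]] := codir i j.
  by exists k' => y By; split; [exact: B_mono pi _ By | exact: B_mono pj _ By].
have B_proper : ProperFilter (filter_from setT B).
  apply: filter_from_proper => i _.
  have fkx : upc (leD i) (f i @` K) (f i x) by exists (f i k); [exists k | exact: f_mono].
  by have [_ [l Ll <-] le] := stages i _ fkx; exists l.
have [|z [_ cluster_z]] := X_compact _ B_proper; first by exists i0.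
have zB i : B i z.
  have clB : closed (B i) by apply: closedI.
  by apply: clB => C nC; apply: cluster_z => //; exists i.
exists z; first by have [] := zB i0.
by apply: f_reflect => i; have [] := zB i.
Qed.

Lemma upc_sub_iff_stages (K L : set X) : closed L ->
  (upc leX K `<=` upc leX L <->
     forall i, upc (leD i) (f i @` K) `<=` upc (leD i) (f i @` L)).
Proof.
by move=> clL; split; [exact: upc_sub_stages | exact: upc_sub_from_stages].
Qed.
End UpClosureTransfer.

Section LimitCone.
Variables (I : Type) (rI : I -> I -> Prop)
  (D : I -> topologicalType) (leD : forall i, D i -> D i -> Prop)
  (dmap : forall i j, rI i j -> D i -> D j)
  (X : topologicalType) (leX : X -> X -> Prop) (f : forall i, X -> D i).
Hypothesis diagram : is_compord_diagram leD dmap.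
Hypothesis limit : is_compord_limit leD dmap leX f.
Set Implicit Arguments. Unset Strict Implicit.

Lemma leD_refl i x : leD i x x.
Proof. by case: diagram => /(_ i) [_ _ [r _] _ _] _ _ _; apply: r. Qed.

Lemma leD_trans i x y z : leD i x y -> leD i y z -> leD i x z.
Proof. by case: diagram => /(_ i) [_ _ _ t _] _ _ _; apply: t. Qed.

Lemma dmap_mono i j (p : rI i j) x y :
  leD i x y -> leD j (dmap i j p x) (dmap i j p y).
Proof. by case: diagram => _ /(_ i j p) [_ m] _ _; apply: m. Qed.

Lemma leX_refl x : leX x x.
Proof. by case: limit => -[[_ _ [r _] _ _] _ _] _; apply: r. Qed.

Lemma leX_trans x y z : leX x y -> leX y z -> leX x z.
Proof. by case: limit => -[[_ _ _ t _] _ _] _; apply: t. Qed.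

Lemma X_compact : compact [set: X].
Proof. by case: limit => -[[_ c _ _ _] _ _] _. Qed.

Lemma cone_comm i j (p : rI i j) y : dmap i j p (f i y) = f j y.
Proof. by case: limit => -[_ _ c] _; apply: c. Qed.

Lemma f_mono i x y : leX x y -> leD i (f i x) (f i y).
Proof. by case: limit => -[_ /(_ i) [_ m] _] _; apply: m. Qed.

Lemma closed_fibres i c :
  closed [set y | leD i (f i y) c] /\ closed [set y | leD i c (f i y)].
Proof.
have [_ /(_ i) [f_cont _] _] := limit.1.
have [/(_ i) [_ _ _ _ /(closed_principal_sets _ _ c) [cl_below cl_above]] _ _ _]
  := diagram.
by split; [move: cl_below | move: cl_above];
  apply: (@preimage_closed _ _ (f i)) => x _; exact: f_cont.
Qed.

(* The projections are jointly injective: the two constant maps bool -> X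
   at a and b induce the same cone over the discretely ordered [bool]. *)
Lemma limit_jointly_injective a b : (forall i, f i a = f i b) -> a = b.
Proof.
move=> fab; have [_ univ] := limit.
have [|h [_ _ h_unique]] := univ bool (@eq bool) (fun i (_ : bool) => f i a).
  split.
  - by apply: bool_is_compord => // x y z -> ->.
  - by move=> i; split; [exact: bool_continuous | move=> x y _; exact: leD_refl].
  - by move=> i j p y; exact: cone_comm.
have const_map (c : X) : is_compord_map (@eq bool) leX (fun _ => c).
  by split; [move=> x; exact: cvg_cst | move=> x y _; exact: leX_refl].
have ha := h_unique _ (const_map a) (fun i y => erefl).
have hb := h_unique _ (const_map b) (fun i y => esym (fab i)).
by have := congr1 (fun g => g true) (etrans ha (esym hb)).
Qed.

(* The projections jointly reflect the order: a cone over [bool] ordered by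
   false <= true, sending false, true to the images of a, b, factors through
   a monotone map picking out a and b. *)
Lemma limit_reflects_order a b : (forall i, leD i (f i a) (f i b)) -> leX a b.
Proof.
move=> fab; have [_ univ] := limit.
have [|h [[_ h_mono] h_fact _]] := univ bool (fun x y : bool => x ==> y)
   (fun i (t : bool) => if t then f i b else f i a).
  split.
  - by apply: bool_is_compord; [case | case; case | case; case; case].
  - move=> i; split; first exact: bool_continuous.
    by case; case => //= _; exact: leD_refl.
  - by move=> i j p [] /=; exact: cone_comm.
have -> : a = h false by apply: limit_jointly_injective => i; rewrite h_fact.
have -> : b = h true by apply: limit_jointly_injective => i; rewrite h_fact.
exact: h_mono.
Qed.

Hypothesis cofiltered : cofiltered_preorder rI.

Lemma limit_upc_sub_iff (K L : set X) : closed L ->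
  (upc leX K `<=` upc leX L <->
     forall i, upc (leD i) (f i @` K) `<=` upc (leD i) (f i @` L)).
Proof.
exact: (@upc_sub_iff_stages I rI D leD dmap X leX f cofiltered (@leD_trans)
  (@dmap_mono) (@cone_comm) (@leX_refl) (@f_mono) (@limit_reflects_order)
  X_compact (fun i c => (@closed_fibres i c).1)).
Qed.

Lemma limit_downc_sub_iff (K L : set X) : closed L ->
  (downc leX K `<=` downc leX L <->
     forall i, downc (leD i) (f i @` K) `<=` downc (leD i) (f i @` L)).
Proof.
apply: (@upc_sub_iff_stages I rI D (fun i x y => leD i y x) dmap X
  (fun x y => leX y x) f cofiltered).
- by move=> i x y z xy yz; exact: leD_trans yz xy.
- by move=> i j p x y; exact: dmap_mono.
- exact: cone_comm.
- exact: leX_refl.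
- by move=> i x y; exact: f_mono.
- by move=> a b ab; exact: limit_reflects_order.
- exact: X_compact.
- by move=> i c; exact: (@closed_fibres i c).2.
Qed.
(* Statement (3): by the convex-hull lemma, both sides reduce to the
   Egli-Milner order between the sets themselves, i.e. to (1) and (2). *)
Lemma limit_EM_le_iff (K L : set X) : closed K -> closed L ->
  (EM_le leX (updownc leX K) (updownc leX L) <->
     forall i, EM_le (leD i) (updownc (leD i) (f i @` K))
                          (updownc (leD i) (f i @` L))).
Proof.
move=> clK clL.
have EM_stage i A B : EM_le (leD i) (updownc (leD i) A) (updownc (leD i) B)
    <-> EM_le (leD i) A B.
  exact: EM_le_updownc (@leD_refl i) (@leD_trans i) A B.
rewrite (EM_le_updownc _ _ (@leX_refl) (@leX_trans)).
have up := limit_upc_sub_iff; have down := limit_downc_sub_iff.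
split.
- by move=> [LK KL] i; apply/EM_stage; split; [exact: (up L K clK).1 | exact: (down K L clL).1].
- move=> stages; split.
  + by apply/(up L K clK) => i; have /EM_stage [] := stages i.
  + by apply/(down K L clL) => i; have /EM_stage [] := stages i.
Qed.
End LimitCone.

Theorem lemma3p11 (I : Type) (rI : I -> I -> Prop)
  (D : I -> topologicalType) (leD : forall i, D i -> D i -> Prop)
  (dmap : forall i j, rI i j -> D i -> D j)
  (X : topologicalType) (leX : X -> X -> Prop) (f : forall i, X -> D i)
  (K L : set X) :
  cofiltered_preorder rI ->
  is_compord_diagram leD dmap ->
  is_compord_limit leD dmap leX f ->
  closed K -> closed L ->
  [/\ (upc leX K `<=` upc leX L <->
         forall i, upc (leD i) (f i @` K) `<=` upc (leD i) (f i @` L)),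
      (downc leX K `<=` downc leX L <->
         forall i, downc (leD i) (f i @` K) `<=` downc (leD i) (f i @` L))
    & (EM_le leX (updownc leX K) (updownc leX L) <->
         forall i, EM_le (leD i) (updownc (leD i) (f i @` K))
                              (updownc (leD i) (f i @` L)))].
Proof.
move=> cofiltered diagram limit clK clL.
split.
- exact: (limit_upc_sub_iff diagram limit cofiltered K clL).
- exact: (limit_downc_sub_iff diagram limit cofiltered K clL).
- exact: (limit_EM_le_iff diagram limit cofiltered clK clL).
Qed.
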